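(* Let $\mathcal{M}=\langle S,\to,L\rangle$ be a labeled transition system, let $B\subseteq S\times S$ be a skipping simulation on $\mathcal{M}$, and let $s,w\in S$. Then every path (branch from the root) of the tree $\mathit{ranktCt}(\mathcal{M},s,w)$ is finite.
   Context: A labeled transition system is $\mathcal{M}=\langle S,\to,L\rangle$ where $S$ is a non-empty set of states, $\to\subseteq S\times S$ is left-total, and $L$ is a function with domain $S$. A fullpath is an infinite sequence $\sigma$ with $\sigma(i)\to\sigma(i+1)$ for all $i$; it starts at $\sigma(0)$. $w\to^{+}v$ means there is a finite path $w=v_0\to\cdots\to v_k=v$ with $k\ge1$. Let $\mathit{INC}$ be the set of strictly increasing infinite sequences of naturals starting at $0$. For a fullpath $\sigma$ and $\pi\in\mathit{INC}$ the $i$-th segment of $\sigma$ is $\sigma(\pi(i)),\dots,\sigma(\pi(i+1)-1)$. $\mathit{match}(B,\sigma,\delta)$ holds iff there exist $\pi,\xi\in\mathit{INC}$ such that for every $i$ and every state $x$ in the $i$-th segment of $\sigma$ w.r.t. $\pi$, $xB\delta(\xi(i))$. $B$ is a skipping simulation (SKS) iff for all $s,w$ with $sBw$: $L(s)=L(w)$, and for every fullpath $\sigma$ starting at $s$ there is a fullpath $\delta$ starting at $w$ with $\mathit{match}(B,\sigma,\delta)$. The computation tree $\mathit{ctree}(\mathcal{M},s)$ has as nodes finite sequences over $S$; it is the smallest tree such that $\langle s\rangle$ is the root, and if $\langle s,\dots,x\rangle$ is a node and $x\to y$ then $\langle s,\dots,x,y\rangle$ is a node whose parent is $\langle s,\dots,x\rangle$.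 For the SKS $B$: if not $sBw$, $\mathit{ranktCt}(\mathcal{M},s,w)$ is the empty tree; otherwise it is the largest subtree of $\mathit{ctree}(\mathcal{M},s)$ (containing the root) such that every non-root node $\langle s,\dots,x\rangle$ satisfies $xBw$ and, for all $v$ with $w\to^{+}v$, not $xBv$. *)

From Stdlib Require Import List Arith.
Import ListNotations.
Set Implicit Arguments.

Section LTS.
Variables (St : Type) (R : St -> St -> Prop) (Lbl : Type) (L : St -> Lbl).

Definition fullpath (sigma : nat -> St) : Prop :=
  forall i, R (sigma i) (sigma (S i)).

Definition INC (pi : nat -> nat) : Prop :=
  pi 0 = 0 /\ forall i, pi i < pi (S i).

Definition match_ (B : St -> St -> Prop) (sigma delta : nat -> St) : Prop :=
  exists pi xi, INC pi /\ INC xi /\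
    forall i j, pi i <= j < pi (S i) -> B (sigma j) (delta (xi i)).

Definition SKS (B : St -> St -> Prop) : Prop :=
  forall s w, B s w ->
    L s = L w /\
    forall sigma, fullpath sigma -> sigma 0 = s ->
      exists delta, fullpath delta /\ delta 0 = w /\ match_ B sigma delta.

Definition tplus (w v : St) : Prop :=
  exists (k : nat) (f : nat -> St), 1 <= k /\ f 0 = w /\ f k = v /\
    forall i, i < k -> R (f i) (f (S i)).

Inductive ctree (s : St) : list St -> Prop :=
| ctree_root : ctree s [s]
| ctree_step : forall n x y, ctree s (n ++ [x]) -> R x y ->
    ctree s (n ++ [x] ++ [y]).

Definition is_subtree (s : St) (T : list St -> Prop) : Prop :=
  (forall n, T n -> ctree s n) /\ T [s] /\
  (forall n y, n <> [] -> T (n ++ [y]) -> T n).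

Definition rank_cond (B : St -> St -> Prop) (w : St) (T : list St -> Prop) :=
  forall n x, n <> [] -> T (n ++ [x]) ->
    B x w /\ forall v, tplus w v -> ~ B x v.

(* ranktCt(M,s,w): empty if not sBw; otherwise the largest subtree of
   ctree(M,s) containing the root satisfying rank_cond, i.e. the union
   of all such subtrees. *)
Definition ranktCt (B : St -> St -> Prop) (s w : St) (n : list St) : Prop :=
  B s w /\ exists T, is_subtree s T /\ rank_cond B w T /\ T n.

Definition infinite_branch (T : list St -> Prop) (s : St) : Prop :=
  exists f : nat -> list St, f 0 = [s] /\
    forall k, T (f k) /\ exists y, f (S k) = f k ++ [y].

End LTS.

(* Along an infinite branch of ranktCt(M,s,w) the last states form a fullpath
   from s whose states after the root are all B-related to w but to no strict
   successor of w.  A skipping simulation matches this fullpath by one from w;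
   the first state of the second segment lies at a position >= 1 and is related
   to a state of the matching path at a position >= 1, i.e. to a strict
   successor of w -- a contradiction. *)

From Stdlib Require Import List Lia.
Import ListNotations.
Set Implicit Arguments.

Lemma ctree_last_step (St : Type) (R : St -> St -> Prop) (s : St) (l : list St) :
  ctree R s l -> forall n x y, l = n ++ [x] ++ [y] -> R x y.
Proof.
  induction 1 as [|n0 x0 y0 _ _ Rxy]; intros n x y E.
  - destruct n as [|a [|b n]]; try destruct n; discriminate.
  - rewrite !app_assoc in E.
    apply app_inj_tail in E as [E Ey]; apply app_inj_tail in E as [_ Ex].
    now subst.
Qed.

Lemma fullpath_tplus (St : Type) (R : St -> St -> Prop) (d : nat -> St) (k : nat) :
  fullpath R d -> 1 <= k -> tplus R (d 0) (d k).
Proof. intros Hd Hk; now exists k, d. Qed.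

Section SkippingSimulation.
Variables (St : Type) (R : St -> St -> Prop) (Lbl : Type) (L : St -> Lbl).
Variables (B : St -> St -> Prop) (HB : SKS R L B).

(* The second segment starts at pi 1 >= 1 and is matched to position xi 1 >= 1. *)
Lemma SKS_later_state_related_to_successor (s w : St) (sigma : nat -> St) :
  B s w -> fullpath R sigma -> sigma 0 = s ->
  exists j v, 1 <= j /\ tplus R w v /\ B (sigma j) v.
Proof.
  intros Bsw Hsigma S0.
  destruct (proj2 (HB Bsw) sigma Hsigma S0)
    as (delta & Hdelta & D0 & pi & xi & [P0 Ppi] & [X0 Xxi] & Hmatch).
  exists (pi 1), (delta (xi 1)); split; [|split].
  - specialize (Ppi 0); lia.
  - rewrite <- D0; apply fullpath_tplus; [exact Hdelta|specialize (Xxi 0); lia].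
  - apply Hmatch; split; [lia|apply Ppi].
Qed.

End SkippingSimulation.

Lemma infinite_branch_states (St : Type) (R : St -> St -> Prop) (s : St)
  (T : list St -> Prop) :
  (forall n, T n -> ctree R s n) -> infinite_branch T s ->
  exists sigma, fullpath R sigma /\ sigma 0 = s /\
    forall k, exists n, n <> [] /\ T (n ++ [sigma (S k)]).
Proof.
  intros HTc (f & F0 & Hf).
  set (sigma k := last (f k) s).
  assert (Hsucc : forall k, f (S k) = f k ++ [sigma (S k)]).
  { intro k; unfold sigma; destruct (proj2 (Hf k)) as [y ->]; now rewrite last_last. }
  assert (Hlast : forall k, exists n, f k = n ++ [sigma k]).
  { intros [|k].
    - exists []; unfold sigma; now rewrite F0.
    - exists (f k); apply Hsucc. }
  exists sigma; split; [|split].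
  - intro k; destruct (Hlast k) as [n En].
    apply (ctree_last_step (HTc _ (proj1 (Hf (S k)))) n).
    rewrite Hsucc, En, <- app_assoc; reflexivity.
  - unfold sigma; now rewrite F0.
  - intro k; exists (f k); split.
    + destruct (Hlast k) as [n ->]; now destruct n.
    + rewrite <- Hsucc; apply Hf.
Qed.

Section RankTree.
Variables (St : Type) (R : St -> St -> Prop) (B : St -> St -> Prop) (s w : St).

Lemma ranktCt_ctree (n : list St) : ranktCt R B s w n -> ctree R s n.
Proof. intros (_ & T & [Tc _] & _ & Tn); exact (Tc n Tn). Qed.

Lemma ranktCt_not_related_to_successor (n : list St) (x v : St) :
  n <> [] -> ranktCt R B s w (n ++ [x]) -> tplus R w v -> ~ B x v.
Proof. intros Hn (_ & T & _ & Hrank & Tn); exact (proj2 (Hrank n x Hn Tn) v). Qed.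

End RankTree.

Theorem lemma1 (St : Type) (R : St -> St -> Prop) (Lbl : Type) (L : St -> Lbl)
  (Hne : inhabited St) (Htot : forall x, exists y, R x y)
  (B : St -> St -> Prop) (HB : SKS R L B) (s w : St) :
  ~ infinite_branch (ranktCt R B s w) s.
Proof.
  (* [Hne] and [Htot] are not needed: an infinite branch already supplies a fullpath. *)
  intros Hbranch.
  assert (Bsw : B s w) by (destruct Hbranch as (f & _ & Hf); apply (Hf 0)).
  destruct (infinite_branch_states (@ranktCt_ctree _ R B s w) Hbranch)
    as (sigma & Hsigma & S0 & Hnonroot).
  destruct (SKS_later_state_related_to_successor HB w Bsw Hsigma S0)
    as ([|j] & v & Hj & Hwv & Bjv); [lia|].
  destruct (Hnonroot j) as (n & Hn & Tn).
  exact (ranktCt_not_related_to_successor _ Hn Tn Hwv Bjv).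
Qed.
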